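(* Let $n\ge 3$ and let $k=n \bmod 4$. Under optimal play, the Sign Game on the cycle graph $C_n$ results in: a draw if $k=0$; a win for Player P if $k=1$; a win for Player 2 if $k=2$; a win for Player N if $k=3$.
   Context: The Sign Game on a finite simple undirected graph $G$: two players, Player P and Player N, alternate turns; the player who moves first is called Player 1 and the other Player 2 (either of P, N may be Player 1). On a turn, a player chooses a vertex of $G$ not yet assigned a value and assigns it $+1$ or $-1$. The game ends when every vertex has been assigned. The score of an edge $uv$ is the product of the values of $u$ and $v$, and the score $s(G)$ of the game is the sum of the scores of all edges. Player P wins if $s(G)>0$, Player N wins if $s(G)<0$, and the game is a draw if $s(G)=0$. ''Under optimal play'' means both players play optimally, each with primary goal of winning and secondary goal of at least drawing; the result is the outcome of this finite perfect-information game under such play, regardless of which of P, N moves first unless the result is stated in terms of Player 1/Player 2. The cycle graph $C_n$ ($n\ge 3$) has vertices $v_1,\dots,v_n$ and edges $v_iv_{i+1}$ for $1\le i\le n-1$ together with $v_nv_1$. *)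

From HB Require Import structures.
From mathcomp Require Import all_boot all_order all_algebra.
Set Implicit Arguments. Unset Strict Implicit. Unset Printing Implicit Defensive.
Import Order.TTheory GRing.Theory Num.Theory.
Local Open Scope ring_scope.

(* A (partial) position of the Sign Game on a vertex type T:
   [None] = unassigned, [Some true] = +1, [Some false] = -1. *)
Definition position (T : finType) := {ffun T -> option bool}.

Definition sval (b : bool) : int := if b then 1 else -1.
Definition vval (o : option bool) : int := if o is Some b then sval b else 0.

(* Each undirected edge {u,v} is
   counted once, via the pair (u,v) with enum_rank u < enum_rank v. *)
Definition simple_graph (T : finType) (e : rel T) : Prop :=
  irreflexive e /\ symmetric e.

Definition score (T : finType) (e : rel T) (f : position T) : int :=
  \sum_(p : T * T | e p.1 p.2 && (enum_rank p.1 < enum_rank p.2)%N)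
     vval (f p.1) * vval (f p.2).

Definition assign (T : finType) (f : position T) (v : T) (b : bool) : position T :=
  [ffun w => if w == v then Some b else f w].

(* Since outcomes are
   ordered loss < draw < win, maximizing/minimizing the sign of the final score
   is exactly "primary goal win, secondary goal draw". [fuel] bounds the number
   of remaining moves (the number of unassigned vertices suffices). *)
Fixpoint game_value (T : finType) (e : rel T) (fuel : nat) (Pturn : bool)
    (f : position T) : int :=
  if fuel is k.+1 then
    if [exists v, f v == None] then
      if Pturn then
        \big[Num.max/(-1)]_(v | f v == None)
          \big[Num.max/(-1)]_(b : bool) game_value e k false (assign f v b)
      else
        \big[Num.min/1]_(v | f v == None)
          \big[Num.min/1]_(b : bool) game_value e k true (assign f v b)
    else sgz (score e f)
  else sgz (score e f).

(* Result of the Sign Game under optimal play from the empty position: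
   1 = P wins, 0 = draw, -1 = N wins.  [P_first] = Player P is Player 1. *)
Definition sign_game_result (T : finType) (e : rel T) (P_first : bool) : int :=
  game_value e #|T| P_first [ffun _ => None].

Definition cycle_rel (n : nat) : rel 'I_n :=
  fun i j => (val j == (i.+1 %% n)%N) || (val i == (j.+1 %% n)%N).
Arguments cycle_rel n : clear implicits.

(* The player who moves second pairs the vertices of C_n into floor(n/2) disjoint
   edges {v_i, v_i+1}.  A move inside an untouched pair is answered on the partner
   vertex so as to win that edge (equal signs for P, opposite signs for N); any
   other move is answered by winning some edge next to an assigned vertex, at the
   cost of at most one pair.  So the second player wins at least floor(n/2) edges,
   and the first player, who opens at v_(n-1) and then pairs the remaining path,
   wins at least floor((n-1)/2); the two guarantees add up to n - 1.  On a
   complete position the score is n - 2D, where the number D of disagreeing edges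
   is even (the product of all edge values is a square).  P forces D <= b + 1 and
   N forces D >= b, where b is N's guarantee, so D is the even number in
   {b, b + 1} and the outcome is sgz (n - 2D); reducing mod 4 gives the theorem. *)

From mathcomp Require Import all_boot all_order all_algebra zify.
Set Implicit Arguments. Unset Strict Implicit. Unset Printing Implicit Defensive.
Import Order.TTheory GRing.Theory Num.Theory.
Local Open Scope ring_scope.

Section Strategies.
Variables (T : finType) (e : rel T).
Implicit Types (f g : position T).

Definition unassigned f : {set T} := [set v | f v == None].

Definition complete f : bool := [forall v, f v != None].

Lemma card_unassigned_eq0 f : (#|unassigned f| == 0%N) = complete f.
Proof.
rewrite cards_eq0; apply/eqP/forallP => [fE v|fc].
  by apply/negP => /eqP fv; have := in_set0 v; rewrite -fE inE fv.
by apply/setP => v; rewrite !inE (negbTE (fc v)).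
Qed.

Lemma card_unassigned_assign f v b :
  f v = None -> #|unassigned (assign f v b)|.+1 = #|unassigned f|.
Proof.
move=> fv; have -> : unassigned (assign f v b) = unassigned f :\ v.
  by apply/setP => w; rewrite !inE ffunE; case: (w =P v) => [->|]; rewrite ?fv ?andbT.
by rewrite [RHS](cardsD1 v) inE fv.
Qed.

Lemma exists_unassigned f : [exists v, f v == None] = ~~ complete f.
Proof. by rewrite negb_forall; apply: eq_existsb => v; rewrite negbK. Qed.

Lemma game_value_complete k P f :
  complete f -> game_value e k P f = sgz (score e f).
Proof. by case: k => //= k fc; rewrite exists_unassigned fc. Qed.

(* [g] has the strategist to move: the game is over in a [Safe] position, or one
   move restores [Safe]. *)
Definition restorable (Safe : position T -> Prop) g : Prop :=
  complete g /\ Safe g \/ exists w b, g w = None /\ Safe (assign g w b).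

Section MaximizerStrategy.
Variables (c : int) (Safe : position T -> Prop).
Hypothesis c_le1 : c <= 1.
Hypothesis safe_complete :
  forall f, complete f -> Safe f -> c <= sgz (score e f).
Hypothesis safe_reply :
  forall f v b, Safe f -> f v = None -> restorable Safe (assign f v b).

Lemma restorable_complete f :
  complete f -> restorable Safe f -> c <= sgz (score e f).
Proof.
move=> fc [[_ /(safe_complete fc)] //|[w [b [fw _]]]].
by move/forallP/(_ w): fc; rewrite fw.
Qed.

Lemma game_value_ge_safe k f : (#|unassigned f| <= k)%N ->
  (Safe f -> c <= game_value e k false f) /\
  (restorable Safe f -> c <= game_value e k true f).
Proof.
elim: k f => [|k IH] f hk.
  have fc : complete f by rewrite -card_unassigned_eq0 -leqn0.
  by rewrite !game_value_complete //; split=> [/(safe_complete fc)|/(restorable_complete fc)].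
have [fc|fnc] := boolP (complete f).
  by rewrite !game_value_complete //; split=> [/(safe_complete fc)|/(restorable_complete fc)].
rewrite /= exists_unassigned fnc; split=> [sf|].
  apply: le_bigmin => // v /eqP fv; apply: le_bigmin => // b _.
  apply: (proj2 (IH _ _)); last exact: safe_reply.
  by have := card_unassigned_assign b fv; lia.
case=> [[fc _]|[w [b [fw sw]]]]; first by rewrite fc in fnc.
apply: (bigmax_sup w); first exact/eqP.
apply: (bigmax_sup b) => //; apply: (proj1 (IH _ _)) => //.
by have := card_unassigned_assign b fw; lia.
Qed.

Lemma sign_game_result_ge_safe (P_first : bool) :
  (if P_first then restorable Safe [ffun=> None] else Safe [ffun=> None]) ->
  c <= sign_game_result e P_first.
Proof.
have hk : (#|unassigned [ffun=> None]| <= #|T|)%N by exact: max_card.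
have [h0 h1] := game_value_ge_safe hk.
by case: P_first; [apply: h1 | apply: h0].
Qed.

End MaximizerStrategy.

Section MinimizerStrategy.
Variables (c : int) (Safe : position T -> Prop).
Hypothesis c_geN1 : -1 <= c.
Hypothesis safe_complete :
  forall f, complete f -> Safe f -> sgz (score e f) <= c.
Hypothesis safe_reply :
  forall f v b, Safe f -> f v = None -> restorable Safe (assign f v b).

Lemma restorable_complete_le f :
  complete f -> restorable Safe f -> sgz (score e f) <= c.
Proof.
move=> fc [[_ /(safe_complete fc)] //|[w [b [fw _]]]].
by move/forallP/(_ w): fc; rewrite fw.
Qed.

Lemma game_value_le_safe k f : (#|unassigned f| <= k)%N ->
  (Safe f -> game_value e k true f <= c) /\
  (restorable Safe f -> game_value e k false f <= c).
Proof.
elim: k f => [|k IH] f hk.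
  have fc : complete f by rewrite -card_unassigned_eq0 -leqn0.
  by rewrite !game_value_complete //;
    split=> [/(safe_complete fc)|/(restorable_complete_le fc)].
have [fc|fnc] := boolP (complete f).
  by rewrite !game_value_complete //;
    split=> [/(safe_complete fc)|/(restorable_complete_le fc)].
rewrite /= exists_unassigned fnc; split=> [sf|].
  apply: bigmax_le => // v /eqP fv; apply: bigmax_le => // b _.
  apply: (proj2 (IH _ _)); last exact: safe_reply.
  by have := card_unassigned_assign b fv; lia.
case=> [[fc _]|[w [b [fw sw]]]]; first by rewrite fc in fnc.
apply: (bigmin_inf w); first exact/eqP.
apply: (bigmin_inf b) => //; apply: (proj1 (IH _ _)) => //.
by have := card_unassigned_assign b fw; lia.
Qed.

Lemma sign_game_result_le_safe (P_first : bool) :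
  (if P_first then Safe [ffun=> None] else restorable Safe [ffun=> None]) ->
  sign_game_result e P_first <= c.
Proof.
have hk : (#|unassigned [ffun=> None]| <= #|T|)%N by exact: max_card.
have [h0 h1] := game_value_le_safe hk.
by case: P_first; [apply: h0 | apply: h1].
Qed.

End MinimizerStrategy.

Lemma score_double f : simple_graph e ->
  score e f *+ 2 = \sum_(p : T * T | e p.1 p.2) vval (f p.1) * vval (f p.2).
Proof.
move=> [irr sym]; rewrite (bigID (fun p : T * T => (enum_rank p.1 < enum_rank p.2)%N)) /=.
rewrite mulr2n; congr (_ + _).
rewrite [RHS](reindex_inj (h := fun p : T * T => (p.2, p.1))); last first.
  by move=> [? ?] [? ?] [-> ->].
apply: eq_big => [[a b]|[a b] _] /=; last by rewrite mulrC.
rewrite [e b a]sym; case: (boolP (e a b)) => //= eab.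
have rab : (enum_rank a != enum_rank b :> nat).
  by apply: contraTneq eab => /val_inj/enum_rank_inj ->; rewrite irr.
by rewrite -leqNgt ltn_neqAle rab.
Qed.

End Strategies.

Lemma ler_sgz (x y : int) : x <= y -> sgz x <= sgz y.
Proof. by move=> le_xy; do 2 case: sgzP => //; lia. Qed.

Section Cycle.
Variable n : nat.
Hypothesis n_gt2 : (2 < n)%N.
Implicit Types (f g : position 'I_n) (S : {set 'I_n}).

Lemma val_ordS (i : 'I_n) : val (ordS i) = (if i.+1 == n then 0 else i.+1)%N.
Proof.
rewrite /=; case: (ltngtP i.+1 n) (ltn_ord i) => // [lt|->] _.
  by rewrite modn_small // (ltn_eqF lt).
by rewrite modnn.
Qed.

Lemma ordS_neq (i : 'I_n) : ordS i != i.
Proof.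
apply/eqP => /(congr1 (@nat_of_ord n)); rewrite val_ordS.
by have := ltn_ord i; case: eqP; lia.
Qed.

Lemma ordS_neq_ord_pred (i : 'I_n) : ordS i != ord_pred i.
Proof.
apply/eqP => /(congr1 (@ordS n)); rewrite ord_predK => /(congr1 (@nat_of_ord n)).
rewrite !val_ordS; have := ltn_ord i.
by case: eqP => [|_]; case: eqP => /= [|_]; lia.
Qed.

Lemma iter_ordS_val (a : 'I_n) m : val (iter m (@ordS n) a) = ((a + m) %% n)%N.
Proof.
elim: m => [|m IH]; first by rewrite addn0 modn_small.
by rewrite iterS /= IH -addn1 modnDml addn1 addnS.
Qed.

Lemma exists_exit (P : pred 'I_n) a b : P a -> ~~ P b -> exists2 w, P w & ~~ P (ordS w).
Proof.
move=> Pa nPb; apply/exists_inP; apply: contraNT nPb => /exists_inPn closed.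
have -> : b = iter (b + (n - a)) (@ordS n) a.
  apply/val_inj; rewrite iter_ordS_val addnCA subnKC ?(ltnW (ltn_ord a)) //.
  by rewrite modnDr modn_small.
by elim: (_ + _)%N => //= m IH; apply/negbNE/closed.
Qed.

Lemma cycle_relE (i j : 'I_n) : cycle_rel n i j = (j == ordS i) || (j == ord_pred i).
Proof.
rewrite /cycle_rel; congr (_ || _); apply/eqP/eqP => [ij|->]; last first.
  exact: (esym (congr1 val (ord_predK i))).
by rewrite -[j]ordSK; congr ord_pred; apply/val_inj.
Qed.

Lemma cycle_simple : simple_graph (cycle_rel n).
Proof.
split=> [i|i j]; last by rewrite /cycle_rel orbC.
rewrite cycle_relE; apply/negbTE; rewrite negb_or eq_sym ordS_neq /=.
by apply: contra (ordS_neq (ord_pred i)) => /eqP {1}->; rewrite ord_predK.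
Qed.

Definition cycle_sum f : int := \sum_(i < n) vval (f i) * vval (f (ordS i)).

Lemma score_cycle f : score (cycle_rel n) f = cycle_sum f.
Proof.
suff : score (cycle_rel n) f *+ 2 = cycle_sum f *+ 2 by rewrite !mulr2n; lia.
rewrite (score_double f cycle_simple).
rewrite -(pair_big_dep xpredT (cycle_rel n) (fun i j => vval (f i) * vval (f j))) /=.
have nbrs i : \sum_(j | cycle_rel n i j) vval (f i) * vval (f j) =
    vval (f i) * vval (f (ordS i)) + vval (f (ord_pred i)) * vval (f i).
  rewrite (bigD1 (ordS i)) /= ?cycle_relE ?eqxx //; congr (_ + _).
  rewrite (big_pred1 (ord_pred i)) 1?mulrC // => j; rewrite /= cycle_relE.
  by case: (j =P ordS i) => [->|_]; rewrite ?(negbTE (ordS_neq_ord_pred i)) ?andbT.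
rewrite (eq_bigr _ (fun i _ => nbrs i)) big_split /= mulr2n; congr (_ + _).
by rewrite (reindex_inj (@ordS_inj n)); apply: eq_bigr => i _; rewrite ordSK.
Qed.

Definition edge_won (c : bool) f (i : 'I_n) : bool :=
  vval (f i) * vval (f (ordS i)) == sval c.

Definition edges_won c f : nat := \sum_(i < n) edge_won c f i.

Lemma edge_sign_complete f i : complete f ->
  vval (f i) * vval (f (ordS i)) = (-1) ^+ edge_won false f i /\
  edge_won true f i = ~~ edge_won false f i.
Proof.
move=> /forallP fc; move: (fc i) (fc (ordS i)); rewrite /edge_won.
by case: (f i) => [[]|]; case: (f (ordS i)) => [[]|].
Qed.

Lemma cycle_sum_complete f : complete f ->
  cycle_sum f = n%:Z - 2 * (edges_won false f)%:Z.
Proof.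
move=> fc; rewrite /cycle_sum /edges_won -!natz natr_sum mulr_sumr.
rewrite -[n in n%:R]card_ord -sumr_const -sumrB; apply: eq_bigr => i _.
by have [-> _] := edge_sign_complete i fc; case: edge_won.
Qed.

Lemma edges_won_complete f : complete f ->
  (edges_won true f + edges_won false f)%N = n.
Proof.
move=> fc; rewrite /edges_won -big_split /= -[RHS]card_ord -sum1_card.
by apply: eq_bigr => i _; have [_ ->] := edge_sign_complete i fc; case: edge_won.
Qed.

Lemma edges_won_false_even f : complete f -> ~~ odd (edges_won false f).
Proof.
move=> fc; have /forallP fc' := fc.
have shift : \prod_(i < n) vval (f (ordS i)) = \prod_(i < n) vval (f i).
  by rewrite [RHS](reindex_inj (@ordS_inj n)).
have : (-1) ^+ edges_won false f = 1 :> int.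
  rewrite /edges_won -prodrXr -(eq_bigr _ (fun i _ => proj1 (edge_sign_complete i fc))).
  rewrite big_split /= shift -big_split /=; apply: big1 => i _.
  by move: (fc' i); case: (f i) => [[]|].
by rewrite -signr_odd; case: odd.
Qed.

Lemma edge_won_assign c f w b i :
  f w = None -> edge_won c f i -> edge_won c (assign f w b) i.
Proof.
rewrite /edge_won !ffunE => fw.
case: (i =P w) => [->|_]; first by rewrite fw mul0r; case: c.
by case: (ordS i =P w) => [->|_] //; rewrite fw mulr0; case: c.
Qed.

Lemma edges_won_assign c f w b :
  f w = None -> (edges_won c f <= edges_won c (assign f w b))%N.
Proof.
move=> fw; apply: leq_sum => i _.
by have := @edge_won_assign c f w b i fw; case: (edge_won c f i) => // ->.
Qed.

(* Playing [bx == c] next to a vertex of sign [bx] gives the edge the value [sval c]. *)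
Lemma edges_won_claim c f w x bx :
  f w = None -> f x = Some bx -> x = ordS w \/ w = ordS x ->
  (edges_won c f < edges_won c (assign f w (bx == c)))%N.
Proof.
move=> fw fx adj.
have xw : x != w by apply/eqP => xw; move: fx; rewrite xw fw.
have [j lost won] : exists2 j, ~~ edge_won c f j & edge_won c (assign f w (bx == c)) j.
  case: adj => adj; [exists w | exists x]; rewrite /edge_won ?ffunE -adj ?eqxx;
    by rewrite ?(negbTE xw) ?fw ?fx ?mul0r ?mulr0; case: c; case: (bx).
rewrite /edges_won (bigD1 j) //= [X in (_ < X)%N](bigD1 j) //= (negbTE lost) won.
rewrite add0n add1n ltnS; apply: leq_sum => i _.
by have := @edge_won_assign c f w (bx == c) i fw; case: (edge_won c f i) => // ->.
Qed.

Definition free_pairs S f : Prop :=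
  forall i, i \in S -> [/\ f i = None, f (ordS i) = None & ordS i \notin S].

(* Each edge {i, ordS i} with [i] in [S] is still free and can be won later by
   answering on the partner vertex. *)
Definition secures c k f : Prop :=
  exists2 S, free_pairs S f & (k <= edges_won c f + #|S|)%N.

Lemma free_pairs_sub S S' f : S' \subset S -> free_pairs S f -> free_pairs S' f.
Proof.
move=> /subsetP sub hS i iS'; have [fi fSi SiS] := hS i (sub i iS').
by split=> //; apply: contra SiS; apply: sub.
Qed.

Lemma free_pairs_assign S f v b :
  free_pairs S f -> v \notin S -> ord_pred v \notin S -> free_pairs S (assign f v b).
Proof.
move=> hS vS pS i iS; have [fi fSi SiS] := hS i iS.
have iv : i != v by apply: contraNneq vS => <-.
have Siv : ordS i != v by apply: contraNneq pS => <-; rewrite ordSK.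
by rewrite !ffunE (negbTE iv) (negbTE Siv).
Qed.

Lemma pair_cover S v :
  (exists2 i, i \in S & v = i \/ v = ordS i) \/ (v \notin S) && (ord_pred v \notin S).
Proof.
case vS: (v \in S); first by left; exists v; [|left].
case pS: (ord_pred v \in S); last by right.
by left; exists (ord_pred v); [|right; rewrite ord_predK].
Qed.

Lemma notin_drop_pair S f i v : free_pairs S f -> i \in S -> v = i \/ v = ordS i ->
  (v \notin S :\ i) && (ord_pred v \notin S :\ i).
Proof.
move=> hS iS [->|->]; rewrite !inE ?ordSK ?eqxx ?andbF /=.
  by apply/nandP; right; apply: contraTN iS => /hS[_ _]; rewrite ord_predK.
by case: (hS i iS) => _ _ /negbTE ->; rewrite andbF.
Qed.

Lemma secures_claim c k S g w x bx :
  free_pairs S g -> (k <= (edges_won c g + #|S|).+1)%N ->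
  w \notin S -> ord_pred w \notin S ->
  g w = None -> g x = Some bx -> x = ordS w \/ w = ordS x ->
  secures c k (assign g w (bx == c)).
Proof.
move=> hS hk wS pS gw gx adj; exists S; first exact: free_pairs_assign.
by have := edges_won_claim c gw gx adj; lia.
Qed.

Lemma secures_move c k g w0 u :
  secures c k g -> g w0 = None -> g u != None ->
  exists w b, g w = None /\ secures c k (assign g w b).
Proof.
move=> [S hS hk] gw0 gu.
have [w /eqP gw] := exists_exit (P := fun v => g v == None) (introT eqP gw0) gu.
case gSw: (g (ordS w)) => [bx|] // _; exists w, (bx == c); split=> //.
case: (pair_cover S w) => [[i iS hw]|/andP[wS pS]]; last first.
  by apply: (secures_claim (S := S) (x := ordS w)) => //; [lia | left].
have /andP[wS pS] := notin_drop_pair hS iS hw.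
apply: (secures_claim (S := S :\ i) (x := ordS w)) => //; last by left.
  exact: free_pairs_sub (subsetDl S [set i]) hS.
by move: hk; rewrite (cardsD1 i S) iS; lia.
Qed.

Lemma secures_reply c k f u b :
  secures c k f -> f u = None -> restorable (secures c k) (assign f u b).
Proof.
move=> [S hS hk] fu; set g := assign f u b.
have hkg : (k <= edges_won c g + #|S|)%N.
  by have := edges_won_assign c b fu; rewrite -/g; lia.
have gu : g u = Some b by rewrite ffunE eqxx.
case: (pair_cover S u) => [[i iS hu]|/andP[uS pS]]; last first.
  have hSg : free_pairs S g by exact: free_pairs_assign.
  have [gc|] := boolP (complete g); first by left; split=> //; exists S.
  rewrite negb_forall => /existsP[w0 /negPn /eqP gw0]; right.
  by apply: (secures_move (w0 := w0) (u := u)); [exists S | | rewrite gu].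
have [w hw [adj wu]] : exists2 w, w = i \/ w = ordS i & (u = ordS w \/ w = ordS u) /\ w != u.
  case: hu => ->; first by exists (ordS i); [right | split; [right | exact: ordS_neq]].
  by exists i; [left | split; [left | rewrite eq_sym; exact: ordS_neq]].
have gw : g w = None.
  by rewrite ffunE (negbTE wu); have [? ? _] := hS i iS; case: hw => ->.
right; exists w, (b == c); split=> //.
have /andP[uS pS] := notin_drop_pair hS iS hu.
have /andP[wS pwS] := notin_drop_pair hS iS hw.
apply: (secures_claim (S := S :\ i) (x := u)) => //.
  by apply: free_pairs_assign => //; exact: free_pairs_sub (subsetDl S [set i]) hS.
by move: hkg; rewrite (cardsD1 i S) iS; lia.
Qed.

Lemma secures_complete c k f : secures c k f -> complete f -> (k <= edges_won c f)%N.
Proof.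
move=> [S hS hk] /forallP fc; suff S0 : #|S| = 0%N by rewrite S0 addn0 in hk.
apply: eq_card0 => i; apply/negP => /hS[fi _ _].
by move: (fc i); rewrite fi.
Qed.

Lemma secures_init c k m f : (m <= n)%N -> (forall i : 'I_n, (i < m)%N -> f i = None) ->
  (k <= m./2)%N -> secures c k f.
Proof.
move=> mn hf hk; have n_gt0 : (0 < n)%N by lia.
pose h (j : 'I_(m./2)) : 'I_n := insubd (Ordinal n_gt0) j.*2.
have hv (j : 'I_(m./2)) : val (h j) = j.*2.
  by rewrite /h val_insubd; have := ltn_ord j; case: ifP => //; lia.
exists [set h j | j : 'I_(m./2)].
  move=> i /imsetP[j _ ->]; have lj := ltn_ord j.
  have vs : val (ordS (h j)) = (j.*2).+1 by rewrite val_ordS hv; case: eqP => //; lia.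
  split; [apply: hf; rewrite hv; lia | apply: hf; rewrite vs; lia |].
  by apply/imsetP => [[j' _ /(congr1 val)]]; rewrite vs hv; lia.
rewrite card_imset ?card_ord; first lia.
by move=> j j' /(congr1 val); rewrite !hv => e; apply/val_inj => /=; lia.
Qed.

Definition secured (first : bool) : nat := (if first then n.-1 else n)./2.

Lemma secured_sum (first : bool) : (secured first + secured (~~ first))%N = n.-1.
Proof. by rewrite /secured; case: first => /=; lia. Qed.

Lemma secures_opening c (first : bool) :
  let Safe := secures c (secured first) in
  if first then restorable Safe [ffun=> None] else Safe [ffun=> None].
Proof.
rewrite /secured; case: first.
  have lst : (n.-1 < n)%N by lia.
  right; exists (Ordinal lst), true; split; first by rewrite ffunE.
  apply: (@secures_init _ _ n.-1) => // [|i hi]; first lia.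
  by rewrite !ffunE; case: (i =P _) hi => // -> /=; lia.
by apply: (@secures_init _ _ n) => // i _; rewrite ffunE.
Qed.

(* [((b.+1)./2).*2] is the even number in {b, b + 1}. *)
Lemma sign_game_cycle (P_first : bool) :
  sign_game_result (cycle_rel n) P_first =
  sgz (n%:Z - 2 * (((secured (~~ P_first)).+1./2).*2)%:Z).
Proof.
have score_complete f : complete f ->
    score (cycle_rel n) f = n%:Z - 2 * (edges_won false f)%:Z.
  by move=> fc; rewrite score_cycle cycle_sum_complete.
apply/le_anti/andP; split.
  apply: (@sign_game_result_le_safe _ _ _ (secures false (secured (~~ P_first)))).
  - by case: sgzP.
  - move=> f fc /secures_complete/(_ fc) won; rewrite score_complete //.
    by apply: ler_sgz; have := edges_won_false_even fc; lia.
  - by move=> f v b; exact: secures_reply.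
  - by rewrite -if_neg; exact: secures_opening.
apply: (@sign_game_result_ge_safe _ _ _ (secures true (secured P_first))).
- by case: sgzP.
- move=> f fc /secures_complete/(_ fc) won; rewrite score_complete //.
  apply: ler_sgz; have := edges_won_false_even fc; have := edges_won_complete fc.
  by have := secured_sum P_first; lia.
- by move=> f v b; exact: secures_reply.
- exact: secures_opening.
Qed.

End Cycle.

Theorem theorem6 (n : nat) (hn : (3 <= n)%N) :
  forall P_first : bool,
    let r := sign_game_result (cycle_rel n) P_first in
    [/\ (n %% 4 = 0)%N -> r = 0,
        (n %% 4 = 1)%N -> r = 1,
        (n %% 4 = 2)%N -> r = (if P_first then -1 else 1) &
        (n %% 4 = 3)%N -> r = -1].
Proof.
move=> P_first /=; rewrite sign_game_cycle // /secured.
case: P_first; split=> n_mod4 /=;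
  by first [apply: gtr0_sgz | apply: ltr0_sgz | apply/eqP; rewrite sgz_eq0]; lia.
Qed.
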